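(* Let $\mathbf{A}$ be a full-rank real matrix, $\mathbf{y}$ a vector, and $\mathbf{x}^*\neq\mathbf{0}$ the solution of $\mathbf{A}\mathbf{x}=\mathbf{y}$. Consider the residual iteration algorithm: set $\mathbf{x}^{(0)}=\mathbf{0}$, $\mathbf{r}^{(0)}=\mathbf{y}$, and for $l=1,\dots,M$, solve the linear system $\mathbf{A}\,\delta\mathbf{x}=\mathbf{r}^{(l-1)}$ by a fixed-point Richardson iteration (started from $\mathbf{0}$ and run until convergence), obtaining an estimate $\delta\mathbf{x}^{(l)}$, then set $\mathbf{x}^{(l)}=\mathbf{x}^{(l-1)}+\delta\mathbf{x}^{(l)}$ and $\mathbf{r}^{(l)}=\mathbf{y}-\mathbf{A}\mathbf{x}^{(l)}$. Let $\theta$ be the asymptotic (normalized $\ell^2$) error of the fixed-point Richardson solver, so that each inner solve returns an estimate whose distance to the exact solution $\mathbf{z}$ of its system $\mathbf{A}\mathbf{z}=\mathbf{r}^{(l-1)}$ is at most $\theta\|\mathbf{z}\|_2$. Then the asymptotic error of the estimate after $M$ residue updates satisfies $$\theta^{(M)}:=\frac{\|\mathbf{x}^*-\mathbf{x}^{(M)}\|_2}{\|\mathbf{x}^*\|_2}\le\theta^M.$$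
   Context: Fixed-point Richardson iteration for $\mathbf{A}\mathbf{z}=\mathbf{r}$ with step size $\tau$: iterate $\mathbf{z}_{k+1}=(\mathbf{I}-\tau\mathbf{A}^T\mathbf{A})\mathbf{z}_k+\tau\mathbf{A}^T\mathbf{r}$, where the matrix-vector products are computed in fixed-point format (signed integer mantissas with one shared exponent per array, the exponents being readjusted to the current arrays), with a normalized $\ell^2$ product error $\eta$; its asymptotic error is $\theta=\limsup_k\|\mathbf{z}-\mathbf{z}_k\|_2/\|\mathbf{z}\|_2$, which under $0<\tau<2/\|\mathbf{A}^T\mathbf{A}\|_2$ and $\eta<\tau\|\mathbf{A}^T\mathbf{A}\|_2/(\kappa-\tau\|\mathbf{A}^T\mathbf{A}\|_2)$ is at most $\eta(\kappa/(\tau\|\mathbf{A}^T\mathbf{A}\|_2)-1)$, $\kappa$ being the condition number of $\mathbf{A}^T\mathbf{A}$. $\|\cdot\|_2$ is the Euclidean norm. *)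

From HB Require Import structures.
From mathcomp Require Import all_boot all_order all_algebra.
From mathcomp Require Import reals.
Set Implicit Arguments. Unset Strict Implicit. Unset Printing Implicit Defensive.
Import Order.TTheory GRing.Theory Num.Theory.
Local Open Scope ring_scope.

Definition norm2 (R : realType) (n : nat) (v : 'cV[R]_n) : R :=
  Num.sqrt (\sum_(i < n) (v i 0) ^+ 2).

(* Iterates of the residual iteration: x^(0) = 0,
   x^(l) = x^(l-1) + dx^(l), where dx l is the estimate returned by the
   inner solver at outer step l (l >= 1). *)
Fixpoint resid_iter (R : realType) (n : nat) (dx : nat -> 'cV[R]_n) (l : nat)
  : 'cV[R]_n :=
  match l with
  | 0 => 0
  | l'.+1 => resid_iter dx l' + dx l'.+1
  end.

Definition residual (R : realType) (m n : nat) (A : 'M[R]_(m, n)) (y : 'cV[R]_m)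
  (dx : nat -> 'cV[R]_n) (l : nat) : 'cV[R]_m :=
  y - A *m resid_iter dx l.

From HB Require Import structures.
From mathcomp Require Import all_boot all_order all_algebra.
From mathcomp Require Import reals.
Import Order.TTheory GRing.Theory Num.Theory.
Local Open Scope ring_scope.

(* Each inner solve is applied to the residual equation A dx = r^(l-1), whose
   exact solution is the current error x* - x^(l-1); the new error is then the
   inner solver's error on that system, so the outer errors shrink by theta at
   every step and the relative error after M steps is at most theta^M. *)

Lemma contraction_iter_le {R : numDomainType} {u : nat -> R} {theta : R} {M : nat} :
  0 <= theta -> (forall l, (l < M)%N -> u l.+1 <= theta * u l) ->
  forall l, (l <= M)%N -> u l <= theta ^+ l * u 0%N.
Proof.
move=> theta_ge0 contr; elim=> [|l IHl] lM; first by rewrite expr0 mul1r.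
apply: le_trans (contr l lM) _.
by rewrite exprS -mulrA ler_wpM2l // IHl // ltnW.
Qed.

Section Norm2.
Context {R : realType} {n : nat}.
Implicit Type v : 'cV[R]_n.

Lemma norm2_ge0 v : 0 <= norm2 v.
Proof. exact: sqrtr_ge0. Qed.

Lemma norm2_gt0 v : v != 0 -> 0 < norm2 v.
Proof.
move=> v_neq0; rewrite /norm2 sqrtr_gt0.
have [i vi_neq0] : exists i, v i 0 != 0.
  apply/existsP; apply: contraR v_neq0; rewrite negb_exists => /forallP v0.
  by apply/eqP/matrixP => i j; rewrite (ord1 j) mxE; apply/eqP/negbNE/v0.
rewrite (bigD1 i) //=; apply: (@lt_le_trans _ _ (v i 0 ^+ 2)).
  by rewrite exprn_even_gt0.
by rewrite lerDl sumr_ge0 // => k _; rewrite sqr_ge0.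
Qed.

End Norm2.

Section ResidualIteration.
Context {R : realType} {m n : nat} {A : 'M[R]_(m, n)} {y : 'cV[R]_m}.
Context {xstar : 'cV[R]_n} {dx : nat -> 'cV[R]_n}.
Hypothesis Axstar : A *m xstar = y.

Lemma mulmx_error_residual l :
  A *m (xstar - resid_iter dx l) = residual A y dx l.
Proof. by rewrite mulmxBr Axstar. Qed.

Lemma error_resid_iterS l :
  xstar - resid_iter dx l.+1 = (xstar - resid_iter dx l) - dx l.+1.
Proof. by rewrite /= opprD addrA. Qed.

Lemma error_resid_iter_contraction (theta : R) l :
  (forall z, A *m z = residual A y dx l -> norm2 (z - dx l.+1) <= theta * norm2 z) ->
  norm2 (xstar - resid_iter dx l.+1) <= theta * norm2 (xstar - resid_iter dx l).
Proof. by move=> solve; rewrite error_resid_iterS solve ?mulmx_error_residual. Qed.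

End ResidualIteration.

Theorem theorem2 (R : realType) (m n : nat) (A : 'M[R]_(m, n))
  (y : 'cV[R]_m) (xstar : 'cV[R]_n) (theta : R) (M : nat)
  (dx : nat -> 'cV[R]_n) :
  \rank A = minn m n ->
  A *m xstar = y ->
  xstar != 0 ->
  (forall l : nat, (0 < l <= M)%N ->
     forall z : 'cV[R]_n, A *m z = residual A y dx l.-1 ->
       norm2 (z - dx l) <= theta * norm2 z) ->
  norm2 (xstar - resid_iter dx M) / norm2 xstar <= theta ^+ M.
Proof.
move=> _ Axstar xstar_neq0 solve.
have xstar_gt0 := norm2_gt0 _ xstar_neq0.
set err := fun l => norm2 (xstar - resid_iter dx l).
have err0 : err 0%N = norm2 xstar by rewrite /err subr0.
have contr l : (l < M)%N -> err l.+1 <= theta * err l.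
  move=> lM; apply: (error_resid_iter_contraction Axstar); exact: solve l.+1 lM.
rewrite ler_pdivrMr // -err0.
clear solve; case: M => [|M] in contr *; first by rewrite expr0 mul1r.
(* theta >= 0 is not assumed: it follows from the first inner solve. *)
have theta_ge0 : 0 <= theta.
  rewrite -(pmulr_lge0 _ xstar_gt0) -err0.
  exact: le_trans (norm2_ge0 _) (contr 0%N isT).
exact: contraction_iter_le theta_ge0 contr _ (leqnn _).
Qed.
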